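(* Let $m,n\in\mathbb{N}$. Then: (1) the complete bipartite graph $K_{1,n}$ is an $\mathcal{N}$ position for Grim; (2) if $m,n>1$, then $K_{m,n}$ is an $\mathcal{N}$ position for Grim if and only if $m+n$ is odd.
   Context: Grim is a two-player game on a finite simple undirected graph. Any isolated vertices of the starting graph are deleted before play begins. Players alternate moves; a move consists of selecting a vertex of the current graph and deleting it together with all its incident edges, after which every vertex that has become isolated is also deleted. The player who makes the last legal move wins (a player facing the empty graph has no move and loses). A graph is an $\mathcal{N}$ position if the player about to move has a winning strategy, and a $\mathcal{P}$ position otherwise. *)

From mathcomp Require Import all_boot.
Set Implicit Arguments. Unset Strict Implicit. Unset Printing Implicit Defensive.

(* A finite simple graph is a symmetric irreflexive relation [e] on a finType [T].
   A game position is the induced subgraph on a vertex set [S : {set T}]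
   (positions reached in play never contain isolated vertices). *)

Definition nonisolated (T : finType) (e : rel T) (S : {set T}) : {set T} :=
  [set x in S | [exists y in S, e x y]].

Definition grim_move (T : finType) (e : rel T) (S : {set T}) (v : T) : {set T} :=
  nonisolated e (S :\ v).

(* N-positions (player to move wins) and P-positions (player to move loses),
   normal play: a player with no legal move loses. *)
Inductive grimN (T : finType) (e : rel T) : {set T} -> Prop :=
| grimN_intro (S : {set T}) (v : T) :
    v \in S -> grimP e (grim_move e S v) -> grimN e S
with grimP (T : finType) (e : rel T) : {set T} -> Prop :=
| grimP_intro (S : {set T}) :
    (forall v : T, v \in S -> grimN e (grim_move e S v)) -> grimP e S.

Definition grim_N_position (T : finType) (e : rel T) : Prop :=
  grimN e (nonisolated e [set: T]).

Definition Kbip (m n : nat) : rel ('I_m + 'I_n)%type :=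
  fun x y => match x, y with
             | inl _, inr _ => true
             | inr _, inl _ => true
             | _, _ => false
             end.
Arguments Kbip m n : clear implicits.

(** A position of Grim on K_{m,n} is determined by the numbers a, b of
    surviving vertices on either side, and a move decrements one of them;
    once a side is empty every remaining vertex is isolated and disappears.
    The losing positions are exactly the empty one and those with a, b >= 2
    and a + b even: from such a position every move leaves both sides
    nonempty and a + b odd, while from any other nonempty position one either
    empties a side of size 1 (or clears an edgeless position) or, when
    a + b is odd and a, b >= 2, decrements a side of size >= 3. *)

From mathcomp Require Import all_boot zify.
Set Implicit Arguments. Unset Strict Implicit. Unset Printing Implicit Defensive.

Section GrimOutcome.
Variables (T : finType) (e : rel T).

Lemma card_grim_move (S : {set T}) v : v \in S -> #|grim_move e S v| < #|S|.
Proof.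
move=> vS; rewrite (cardsD1 v S) vS add1n ltnS.
by apply/subset_leq_card/subsetP => x; rewrite inE => /andP[].
Qed.

Lemma grimP_grim_move (S : {set T}) v : grimP e S -> v \in S -> grimN e (grim_move e S v).
Proof. by case: S / => S Nmoves /Nmoves. Qed.

Lemma grimN_grimP_exclusive (S : {set T}) : grimN e S -> grimP e S -> False.
Proof.
have [k] := ubnP #|S|; elim: k S => // k IH S /ltnSE + NS.
case: NS => {}S v vS Pmove leSk PS.
apply: (IH _ _ (grimP_grim_move PS vS) Pmove).
exact: leq_trans (card_grim_move vS) leSk.
Qed.

Variable lost : {set T} -> bool.
Hypothesis lost_grim_move : forall S v, lost S -> v \in S -> ~~ lost (grim_move e S v).
Hypothesis won_grim_move : forall S, ~~ lost S -> exists2 v, v \in S & lost (grim_move e S v).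

Lemma grim_outcome (S : {set T}) : if lost S then grimP e S else grimN e S.
Proof.
have [k] := ubnP #|S|; elim: k S => // k IH S /ltnSE leSk.
have IHmove v : v \in S -> if lost (grim_move e S v) then grimP e (grim_move e S v)
                                                     else grimN e (grim_move e S v).
  by move=> vS; apply: IH; exact: leq_trans (card_grim_move vS) leSk.
case: ifP => [lostS | /negbT wonS].
- constructor => v vS; have := IHmove v vS.
  by rewrite (negbTE (lost_grim_move lostS vS)).
- have [v vS lost_move] := won_grim_move wonS.
  by apply: (grimN_intro vS); have := IHmove v vS; rewrite lost_move.
Qed.

Lemma grimNE (S : {set T}) : grimN e S <-> ~~ lost S.
Proof.
have := grim_outcome S; case: (lost S) => // PS; split=> // NS.
by case: (grimN_grimP_exclusive NS PS).
Qed.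

End GrimOutcome.

Definition Kbip_lost (a b : nat) : bool := (a + b == 0) || [&& 1 < a, 1 < b & ~~ odd (a + b)].

(* Deleting a vertex of the side of size [a] leads to (a - 1, b), or to the
   empty position when this empties a side. *)
Definition lost_after_left (a b : nat) : bool := ~~ ((1 < a) && (0 < b)) || Kbip_lost a.-1 b.

Lemma Kbip_lostC a b : Kbip_lost a b = Kbip_lost b a.
Proof. by rewrite /Kbip_lost addnC andbCA. Qed.

Lemma lost_after_leftF a b : Kbip_lost a b -> 0 < a -> ~~ lost_after_left a b.
Proof. rewrite /lost_after_left /Kbip_lost; lia. Qed.

Lemma Kbip_won a b : ~~ Kbip_lost a b ->
  (0 < a) && lost_after_left a b || (0 < b) && lost_after_left b a.
Proof. rewrite /lost_after_left /Kbip_lost; lia. Qed.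

Section CompleteBipartite.
Variables m n : nat.
Local Notation V := ('I_m + 'I_n)%type.
Local Notation e := (Kbip m n).

Definition lside (S : {set V}) : {set 'I_m} := [set i | inl i \in S].
Definition rside (S : {set V}) : {set 'I_n} := [set j | inr j \in S].
Definition Kbip_lost_set (S : {set V}) : bool := Kbip_lost #|lside S| #|rside S|.

Lemma lside_gt0 (S : {set V}) : (0 < #|lside S|) = [exists i, inl i \in S].
Proof.
rewrite card_gt0; apply/set0Pn/existsP => -[i]; rewrite ?inE; by exists i; rewrite ?inE.
Qed.

Lemma rside_gt0 (S : {set V}) : (0 < #|rside S|) = [exists j, inr j \in S].
Proof.
rewrite card_gt0; apply/set0Pn/existsP => -[j]; rewrite ?inE; by exists j; rewrite ?inE.
Qed.

Lemma nonisolated_Kbip (S : {set V}) :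
  nonisolated e S = if (0 < #|lside S|) && (0 < #|rside S|) then S else set0.
Proof.
rewrite lside_gt0 rside_gt0; apply/setP => x; rewrite /nonisolated !inE.
case: ifP => [/andP[/existsP[i iS] /existsP[j jS]] | /negbT noside].
- case: (x \in S) => //; apply/existsP.
  by case: x => [i'|j']; [exists (inr j) | exists (inl i)]; rewrite /= andbT.
- rewrite inE; apply: negbTE; apply: contra noside => /andP[xS /existsP[y /andP[yS exy]]].
  by case: x y xS yS exy => [i|j] [i'|j'] //= xS yS _; apply/andP; split;
    apply/existsP; eexists; eassumption.
Qed.

Lemma lside_setD1l (S : {set V}) i : lside (S :\ inl i) = lside S :\ i.
Proof. by apply/setP => i'; rewrite !inE (inj_eq (@inl_inj _ _)). Qed.

Lemma rside_setD1l (S : {set V}) i : rside (S :\ inl i) = rside S.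
Proof. by apply/setP => j; rewrite !inE. Qed.

Lemma lside_setD1r (S : {set V}) j : lside (S :\ inr j) = lside S.
Proof. by apply/setP => i; rewrite !inE. Qed.

Lemma rside_setD1r (S : {set V}) j : rside (S :\ inr j) = rside S :\ j.
Proof. by apply/setP => j'; rewrite !inE (inj_eq (@inr_inj _ _)). Qed.

Lemma Kbip_lost_set0 : Kbip_lost_set set0.
Proof.
have lside0 : lside set0 = set0 by apply/setP => i; rewrite !inE.
have rside0 : rside set0 = set0 by apply/setP => j; rewrite !inE.
by rewrite /Kbip_lost_set lside0 rside0 !cards0.
Qed.

Lemma Kbip_lost_grim_move_inl (S : {set V}) i : inl i \in S ->
  Kbip_lost_set (grim_move e S (inl i)) = lost_after_left #|lside S| #|rside S|.
Proof.
move=> iS; rewrite /grim_move nonisolated_Kbip lside_setD1l rside_setD1l.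
rewrite (cardsD1 i (lside S)) inE iS add1n /lost_after_left ltnS.
by case: ifP => _; rewrite ?Kbip_lost_set0 // /Kbip_lost_set lside_setD1l rside_setD1l.
Qed.

Lemma Kbip_lost_grim_move_inr (S : {set V}) j : inr j \in S ->
  Kbip_lost_set (grim_move e S (inr j)) = lost_after_left #|rside S| #|lside S|.
Proof.
move=> jS; rewrite /grim_move nonisolated_Kbip lside_setD1r rside_setD1r.
rewrite (cardsD1 j (rside S)) inE jS add1n /lost_after_left ltnS andbC.
by case: ifP => _; rewrite ?Kbip_lost_set0 // /Kbip_lost_set lside_setD1r rside_setD1r Kbip_lostC.
Qed.

Lemma Kbip_lost_grim_move (S : {set V}) v :
  Kbip_lost_set S -> v \in S -> ~~ Kbip_lost_set (grim_move e S v).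
Proof.
move=> lostS; case: v => [i|j] vS.
- rewrite Kbip_lost_grim_move_inl //; apply: lost_after_leftF lostS _.
  by rewrite lside_gt0; apply/existsP; exists i.
- rewrite Kbip_lost_grim_move_inr //; apply: lost_after_leftF; first by rewrite Kbip_lostC.
  by rewrite rside_gt0; apply/existsP; exists j.
Qed.

Lemma Kbip_won_grim_move (S : {set V}) :
  ~~ Kbip_lost_set S -> exists2 v, v \in S & Kbip_lost_set (grim_move e S v).
Proof.
move/Kbip_won; rewrite lside_gt0 rside_gt0.
case/orP=> [/andP[/existsP[i iS] lost_left] | /andP[/existsP[j jS] lost_right]].
- by exists (inl i); rewrite ?Kbip_lost_grim_move_inl.
- by exists (inr j); rewrite ?Kbip_lost_grim_move_inr.
Qed.

Lemma card_lsideT : #|lside [set: V]| = m.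
Proof.
have -> : lside [set: V] = setT by apply/setP => i; rewrite !inE.
by rewrite cardsT card_ord.
Qed.

Lemma card_rsideT : #|rside [set: V]| = n.
Proof.
have -> : rside [set: V] = setT by apply/setP => j; rewrite !inE.
by rewrite cardsT card_ord.
Qed.

Lemma Kbip_N_position : 0 < m -> 0 < n -> grim_N_position e <-> ~~ Kbip_lost m n.
Proof.
move=> m_gt0 n_gt0.
rewrite /grim_N_position nonisolated_Kbip card_lsideT card_rsideT m_gt0 n_gt0 /=.
have := grimNE Kbip_lost_grim_move Kbip_won_grim_move [set: V].
by rewrite /Kbip_lost_set card_lsideT card_rsideT.
Qed.

End CompleteBipartite.

Theorem theorem3p2 :
  (forall n : nat, 0 < n -> grim_N_position (Kbip 1 n)) /\
  (forall m n : nat, 1 < m -> 1 < n ->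
     (grim_N_position (Kbip m n) <-> odd (m + n))).
Proof.
split=> [n n_gt0 | m n m_gt1 n_gt1].
- by apply/Kbip_N_position => //; rewrite /Kbip_lost; lia.
- have -> : odd (m + n) = ~~ Kbip_lost m n by rewrite /Kbip_lost; lia.
  by apply: Kbip_N_position; lia.
Qed.
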